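(* Let $X$ be a Minkowski space and let $A=\{\mathbf{x}_1,\dots,\mathbf{x}_{2k}\}\subset X$ be a $d$-collinear set of even size, listed in its natural order. Then \[\mathrm{FT}(A)=\bigcap_{i=1}^k[\mathbf{x}_i\mathbf{x}_{2k-i+1}]_d=[\mathbf{x}_k\mathbf{x}_{k+1}]_d.\]
   Context: A Minkowski space is a finite-dimensional real normed space $(X,\|\cdot\|)$. A metric line is a subset of $X$ isometric to $\mathbb{R}$; a set is $d$-collinear if it is contained in a metric line. A finite $d$-collinear set $\{\mathbf{x}_1,\dots,\mathbf{x}_m\}$ is listed in its natural order if there is an isometry $f$ from it onto a subset of $\mathbb{R}$ with $f(\mathbf{x}_1)<f(\mathbf{x}_2)<\dots<f(\mathbf{x}_m)$. The $d$-segment is $[\mathbf{x}\mathbf{y}]_d=\{\mathbf{z}: \|\mathbf{x}-\mathbf{z}\|+\|\mathbf{z}-\mathbf{y}\|=\|\mathbf{x}-\mathbf{y}\|\}$. $\mathrm{FT}(A)$ is the set of minimizers of $\mathbf{x}\mapsto\sum_{\mathbf{a}\in A}\|\mathbf{x}-\mathbf{a}\|$. *)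

(* R : realType, the Minkowski space is 'rV[R]_n with an
   arbitrary norm N (every finite-dimensional real normed space is of this form). *)
From HB Require Import structures.
From mathcomp Require Import all_boot all_order all_algebra.
From mathcomp Require Import reals.
Set Implicit Arguments. Unset Strict Implicit. Unset Printing Implicit Defensive.
Import Order.TTheory GRing.Theory Num.Theory.
Local Open Scope ring_scope.

Section Minkowski.
Variables (R : realType) (n : nat).
Notation X := 'rV[R]_n.

Definition is_norm (N : X -> R) : Prop :=
  [/\ forall x, N x = 0 -> x = 0,
      forall (a : R) x, N (a *: x) = `|a| * N x &
      forall x y, N (x + y) <= N x + N y].

Definition isometry_line (N : X -> R) (f : R -> X) : Prop :=
  forall s t : R, N (f s - f t) = `|s - t|.

Definition d_collinear (N : X -> R) (m : nat) (x : nat -> X) : Prop :=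
  exists f : R -> X, isometry_line N f /\
    forall i, (i < m)%N -> exists t : R, f t = x i.

Definition natural_order (N : X -> R) (m : nat) (x : nat -> X) : Prop :=
  exists g : X -> R,
    (forall i j, (i < m)%N -> (j < m)%N -> `|g (x i) - g (x j)| = N (x i - x j)) /\
    (forall i j, (i < j)%N -> (j < m)%N -> g (x i) < g (x j)).

Definition dseg (N : X -> R) (a b : X) : X -> Prop :=
  fun z => N (a - z) + N (z - b) = N (a - b).

Definition FT (N : X -> R) (m : nat) (x : nat -> X) : X -> Prop :=
  fun z => forall y : X,
    \sum_(i < m) N (z - x i) <= \sum_(i < m) N (y - x i).

End Minkowski.

From HB Require Import structures.
From mathcomp Require Import all_boot all_order all_algebra.
From mathcomp Require Import reals.
From mathcomp Require Import zify lra.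
Set Implicit Arguments. Unset Strict Implicit. Unset Printing Implicit Defensive.
Import Order.TTheory GRing.Theory Num.Theory.
Local Open Scope ring_scope.

(* Pair the points outside in: x_i with x_{2k-i+1}.  By the triangle inequality
   the cost of a point z is at least the sum of the pair distances, with equality
   exactly when z lies on every segment [x_i x_{2k-i+1}]_d.  These segments are
   nested along the line, so they all contain [x_k x_{k+1}]_d; in particular the
   bound is attained, hence the minimizers are the points of the intersection,
   and the intersection is the innermost segment. *)

Lemma sum_mirror_pairs (V : nmodType) (k : nat) (F : nat -> V) :
  \sum_(i < 2 * k) F i = \sum_(j < k) (F j + F (2 * k - 1 - j)%N).
Proof.
rewrite -(big_mkord xpredT F) (big_cat_nat (n := k)) //=; last lia.
rewrite -{2}(add0n k) big_addn (_ : (2 * k - k = k)%N); last lia.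
rewrite [X in _ + X]big_nat_rev /= -big_split /= big_mkord.
apply: eq_bigr => i _; congr (_ + F _); have := ltn_ord i; lia.
Qed.

Section NormedSpace.
Variables (R : realType) (n : nat) (N : 'rV[R]_n -> R).
Hypothesis normN : is_norm N.

Lemma normN0 : N 0 = 0.
Proof. by case: normN => _ hZ _; rewrite -(scale0r 0) hZ normr0 mul0r. Qed.

Lemma normN_opp (v : 'rV[R]_n) : N (- v) = N v.
Proof. by case: normN => _ hZ _; rewrite -scaleN1r hZ normrN normr1 mul1r. Qed.

Lemma normN_distC (a b : 'rV[R]_n) : N (a - b) = N (b - a).
Proof. by rewrite -normN_opp opprB. Qed.

Lemma normN_dist_triangle (a b c : 'rV[R]_n) :
  N (a - c) <= N (a - b) + N (b - c).
Proof.
case: normN => _ _ hT.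
by have -> : a - c = (a - b) + (b - c) by rewrite addrA subrK.
Qed.

Lemma dseg_endpoint_l (a b : 'rV[R]_n) : dseg N a b a.
Proof. by rewrite /dseg subrr normN0 add0r. Qed.

Lemma dseg_subset (a p q b z : 'rV[R]_n) :
  N (a - p) + N (p - q) + N (q - b) = N (a - b) ->
  dseg N p q z -> dseg N a b z.
Proof.
rewrite /dseg => aligned hz.
have := normN_dist_triangle a p z; have := normN_dist_triangle z q b.
have := normN_dist_triangle a z b; lra.
Qed.

Lemma sum_dseg_minimizers (k : nat) (a b : nat -> 'rV[R]_n) (w z : 'rV[R]_n) :
  (forall j, (j < k)%N -> dseg N (a j) (b j) w) ->
  (forall y, \sum_(j < k) (N (a j - z) + N (z - b j))
             <= \sum_(j < k) (N (a j - y) + N (y - b j))) <->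
  (forall j, (j < k)%N -> dseg N (a j) (b j) z).
Proof.
move=> hw; pose gap y (j : 'I_k) := N (a j - y) + N (y - b j) - N (a j - b j).
have gap_ge0 y j : 0 <= gap y j by rewrite subr_ge0 normN_dist_triangle.
have gap0 y (i : 'I_k) : dseg N (a i) (b i) y -> gap y i = 0.
  by rewrite /gap /dseg => ->; rewrite subrr.
split=> [hmin j jk | hz y].
- have gap_sum0 : \sum_(i < k) gap z i = 0.
    apply/eqP; rewrite eq_le sumr_ge0 ?andbT // /gap sumrB subr_le0.
    by have := hmin w; rewrite (eq_bigr _ (fun (i : 'I_k) _ => hw i (ltn_ord i))).
  have /eqP := @psumr_eq0P _ _ _ _ (fun i _ => gap_ge0 z i) gap_sum0 (Ordinal jk) isT.
  by rewrite subr_eq0 => /eqP.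
- have gap_sum0 : \sum_(i < k) gap z i = 0 by apply: big1 => i _; exact/gap0/hz.
  rewrite -subr_ge0 -sumrB (eq_bigr (fun i => gap y i - gap z i)); last first.
    by move=> i _; rewrite /gap; lra.
  by rewrite sumrB gap_sum0 subr0 sumr_ge0.
Qed.

Lemma natural_order_aligned (m : nat) (x : nat -> 'rV[R]_n) :
  natural_order N m x -> forall i p q j, (i <= p <= q)%N -> (q <= j < m)%N ->
  N (x i - x p) + N (x p - x q) + N (x q - x j) = N (x i - x j).
Proof.
case=> g [gdist gmono] i p q j /andP[ip pq] /andP[qj jm].
have dist u v : (u <= v)%N -> (v < m)%N -> N (x u - x v) = g (x v) - g (x u).
  move=> uv vm; rewrite -gdist ?(leq_ltn_trans uv) // distrC ger0_norm // subr_ge0.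
  by case: (ltngtP u v) uv => // [/gmono/(_ vm)/ltW | ->].
rewrite !dist //; try lia; lra.
Qed.

Lemma sum_norm_mirror_pairs (k : nat) (x : nat -> 'rV[R]_n) (y : 'rV[R]_n) :
  \sum_(i < 2 * k) N (y - x i) =
  \sum_(j < k) (N (x j - y) + N (y - x (2 * k - 1 - j)%N)).
Proof.
rewrite (sum_mirror_pairs k (fun i => N (y - x i))).
by apply: eq_bigr => j _; rewrite normN_distC.
Qed.

End NormedSpace.

Theorem corollary3p19 (R : realType) (n : nat) (N : 'rV[R]_n -> R)
  (k : nat) (x : nat -> 'rV[R]_n) :
  is_norm N -> (0 < k)%N ->
  d_collinear N (2 * k) x -> natural_order N (2 * k) x ->
  (forall z, FT N (2 * k) x z <->
     (forall j, (j < k)%N -> dseg N (x j) (x (2 * k - 1 - j)%N) z)) /\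
  (forall z, (forall j, (j < k)%N -> dseg N (x j) (x (2 * k - 1 - j)%N) z) <->
     dseg N (x k.-1) (x k) z).
Proof.
move=> normN k_gt0 _ /natural_order_aligned aligned.
have nested j z : (j < k)%N -> dseg N (x k.-1) (x k) z ->
    dseg N (x j) (x (2 * k - 1 - j)%N) z.
  by move=> jk; apply: dseg_subset normN _ _ _ _ _ (aligned _ _ _ _ _ _); lia.
split=> z.
- rewrite -(sum_dseg_minimizers normN (w := x k.-1)); last first.
    by move=> j jk; apply: nested => //; apply: dseg_endpoint_l.
  by rewrite /FT; split=> hmin y; move: (hmin y); rewrite !(sum_norm_mirror_pairs normN).
- split=> [hz | hmid j jk]; last exact: nested.
  by have := hz k.-1; rewrite (_ : (2 * k - 1 - k.-1 = k)%N); [apply; lia | lia].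
Qed.
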